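(* Let $D \subset \mathbb{N}$ be finite and let $G_n$ be the circulant graph on $n$ vertices with set of distances $D$. Then \[ \lim_{n \to \infty} \frac{\alpha(G_n)}{n} = \sup_{n} \frac{\alpha(G_n)}{n}. \]
   Context: $\mathbb{N} = \{1,2,\ldots\}$. $G_n$ has vertex set $\{0, \ldots, n-1\}$, and vertices $u, v$ (possibly equal) are adjacent iff there is $d \in D$ with $u - v \equiv d \pmod n$ or $v - u \equiv d \pmod n$ (loops may occur when $n \leq \max D$). $\alpha(G)$ is the maximum size of an independent set, which contains no two adjacent vertices and no vertex with a loop. *)

From mathcomp Require Import all_boot.
Set Implicit Arguments. Unset Strict Implicit. Unset Printing Implicit Defensive.

(* Circulant graph G_n on vertex set 'I_n = {0,...,n-1} with distance set D
   (a finite set of positive naturals, given as a list).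
   u ~ v iff exists d in D, u - v = d (mod n) or v - u = d (mod n);
   loops (u ~ u) occur when some d is divisible by n. *)
Definition circ_adj (D : seq nat) (n : nat) (u v : 'I_n) : bool :=
  has (fun d => ((v + d) %% n == u %% n) || ((u + d) %% n == v %% n)) D.

(* An independent set: no two (possibly equal) vertices adjacent,
   so in particular no vertex carrying a loop. *)
Definition circ_indep (D : seq nat) (n : nat) (S : {set 'I_n}) : bool :=
  [forall u in S, forall v in S, ~~ circ_adj D u v].

Definition circ_alpha (D : seq nat) (n : nat) : nat :=
  \max_(S : {set 'I_n} | circ_indep D S) #|S|.

From mathcomp Require Import all_boot.
From Stdlib Require Import Reals.
From mathcomp Require Import zify.
From Stdlib Require Import Lra Classical.

(* Let M = max D. Placing p translates of a maximum independent set of G_n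
   in consecutive blocks of length n inside Z_m gives an independent set of
   G_m as soon as p n + M <= m: below m - M no distance wraps around modulo m,
   so an adjacency of G_m between two block positions reduces modulo n to an
   adjacency of G_n. Hence p alpha(G_n) <= alpha(G_m), which for
   p = (m - M) / n gives alpha(G_m)/m >= alpha(G_n)/n - (n + M)/m. The ratios
   are bounded by 1, so they eventually come within any epsilon of their
   supremum, as in Fekete's lemma. *)

Set Implicit Arguments.
Unset Strict Implicit.
Unset Printing Implicit Defensive.

Lemma block_index_inj n i j (s t : 'I_n) :
  i * n + s = j * n + t -> i = j /\ s = t.
Proof.
move=> E; have n_gt0 : 0 < n by apply: leq_ltn_trans (ltn_ord s).
split; last apply: val_inj.
- by have := congr1 (divn^~ n) E; rewrite !divnMDl // !divn_small // !addn0.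
- by have := congr1 (modn^~ n) E; rewrite !modnMDl !modn_small.
Qed.

Section CirculantIndependence.

Variable D : seq nat.

Lemma circ_alpha_le_order n : circ_alpha D n <= n.
Proof.
apply/bigmax_leqP => S _.
by rewrite -[n in _ <= n]card_ord max_card.
Qed.

Lemma circ_indep_card_le_alpha n (S : {set 'I_n}) :
  circ_indep D S -> #|S| <= circ_alpha D n.
Proof. exact: (@leq_bigmax_cond _ (fun S => circ_indep D S) (fun S => #|S|)). Qed.

Lemma circ_alpha_attained n :
  exists2 S : {set 'I_n}, circ_indep D S & circ_alpha D n = #|S|.
Proof.
have indep0 : circ_indep D (set0 : {set 'I_n}).
  by apply/forall_inP => u; rewrite in_set0.
have : 0 < #|[pred S : {set 'I_n} | circ_indep D S]|.
  by apply/card_gt0P; exists set0.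
by move/(eq_bigmax_cond (fun S : {set 'I_n} => #|S|)) => [S]; exists S.
Qed.

Lemma circ_adj_fold M n m (u v : 'I_m) (x y : 'I_n) :
  all (fun d => d <= M) D -> u + M < m -> v + M < m ->
  x = u %% n :> nat -> y = v %% n :> nat ->
  circ_adj D u v -> circ_adj D x y.
Proof.
move=> /allP le_DM ltu ltv xE yE /hasP [d Dd adj_uv]; apply/hasP; exists d => //.
have ledM := le_DM d Dd.
rewrite xE yE !modnDml !modn_mod.
case/orP: adj_uv => /eqP; rewrite !(@modn_small _ m) ?ltn_ord //; try lia.
  by move=> ->; rewrite eqxx.
by move=> ->; rewrite eqxx orbT.
Qed.

Lemma circ_alpha_blocks M n m p :
  all (fun d => d <= M) D -> p * n + M <= m -> p * circ_alpha D n <= circ_alpha D m.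
Proof.
move=> le_DM le_pnM_m.
have [S indep_S ->] := circ_alpha_attained n.
have block_lt (x : 'I_p * 'I_n) : x.1 * n + x.2 + M < m.
  by have := ltn_ord x.1; have := ltn_ord x.2; nia.
pose f x : 'I_m := Ordinal (leq_ltn_trans (leq_addr M _) (block_lt x)).
have f_inj : injective f.
  move=> [i s] [j t] /(congr1 val) /= /block_index_inj [ij st].
  by rewrite (val_inj ij) st.
rewrite -[p]card_ord -cardsT -cardsX -(card_imset _ f_inj).
apply: circ_indep_card_le_alpha; apply/forall_inP => _ /imsetP [[i s] /setXP [_ Ss] ->].
apply/forall_inP => _ /imsetP [[j t] /setXP [_ St] ->].
have /forall_inP /(_ _ Ss) /forall_inP /(_ _ St) := indep_S.
apply: contra; apply: (circ_adj_fold le_DM); rewrite /= ?modnMDl ?modn_small //.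
- exact: (block_lt (i, s)).
- exact: (block_lt (j, t)).
Qed.

End CirculantIndependence.

Lemma is_lub_approx (E : R -> Prop) (L e : R) :
  is_lub E L -> (0 < e)%R -> exists x, E x /\ (L - e < x)%R.
Proof.
move=> [_ least] e_pos; apply: NNPP => no_close.
have ub : is_upper_bound E (L - e).
  by move=> x Ex; apply: Rnot_lt_le => close; apply: no_close; exists x.
by have := least _ ub; lra.
Qed.

Section AlmostSupermultiplicative.

Variables (a : nat -> nat) (M : nat).
Hypothesis a_le : forall n, a n <= n.
Hypothesis a_blocks : forall n m p, p * n + M <= m -> p * a n <= a m.

Lemma ratio_gap_nat n m : 0 < n -> m * a n <= n * a m + n * (n + M).
Proof.
move=> n_gt0; set p := (m - M) %/ n.
have m_lt : m < p * n + n + M.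
  by have := ltn_pmod (m - M) n_gt0; have := divn_eq (m - M) n; lia.
have pa_le : p * a n <= a m.
  case: (leqP M m) => [le_Mm | lt_mM]; last by rewrite /p (_ : m - M = 0) ?div0n //; lia.
  by apply: a_blocks; have := divn_eq (m - M) n; lia.
have := a_le n; nia.
Qed.

Open Scope R_scope.

Lemma ratio_gap n m : (0 < n)%nat -> (0 < m)%nat ->
  INR (a n) / INR n <= INR (a m) / INR m + INR (n + M) / INR m.
Proof.
move=> n_gt0 m_gt0.
have n_pos : 0 < INR n by apply/lt_0_INR/ltP.
have m_pos : 0 < INR m by apply/lt_0_INR/ltP.
have /leP/le_INR := ratio_gap_nat m n_gt0; rewrite plus_INR !mult_INR => gap.
apply: (Rmult_le_reg_r (INR n * INR m)); first exact: Rmult_lt_0_compat.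
rewrite Rmult_plus_distr_r.
have -> : INR (a n) / INR n * (INR n * INR m) = INR m * INR (a n) by field; lra.
have -> : INR (a m) / INR m * (INR n * INR m) = INR n * INR (a m) by field; lra.
have -> : INR (n + M) / INR m * (INR n * INR m) = INR n * INR (n + M) by field; lra.
exact: gap.
Qed.

Lemma ratio_le1 n : (0 < n)%nat -> INR (a n) / INR n <= 1.
Proof.
move=> n_gt0; have n_pos : 0 < INR n by apply/lt_0_INR/ltP.
apply: (Rmult_le_reg_r (INR n)) => //.
rewrite /Rdiv Rmult_assoc Rinv_l ?Rmult_1_r ?Rmult_1_l; last lra.
exact/le_INR/leP.
Qed.

Lemma ratio_cvg_sup :
  exists L : R,
    is_lub (fun r => exists n, (1 <= n)%nat /\ r = INR (a n) / INR n) L /\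
    Un_cv (fun k => INR (a k.+1) / INR k.+1) L.
Proof.
pose E r := exists n, (1 <= n)%nat /\ r = INR (a n) / INR n.
have [L lubL] : {L | is_lub E L}.
  apply: completeness; first by exists 1 => _ [n [n_gt0 ->]]; exact: ratio_le1.
  by exists (INR (a 1) / INR 1); exists 1%nat.
exists L; split => // e e_pos.
have e2_pos : 0 < e / 2 by lra.
have [_ [[n0 [n0_gt0 ->]] close]] := is_lub_approx lubL e2_pos.
have [N N_big] := INR_archimed (e / 2) (INR (n0 + M)) e2_pos.
exists N => k le_Nk; rewrite /R_dist.
have m_pos : 0 < INR k.+1 by apply: lt_0_INR; lia.
have le_L : INR (a k.+1) / INR k.+1 <= L by apply: (proj1 lubL); exists k.+1.
have gap := ratio_gap n0_gt0 (ltn0Sn k).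
have small : INR (n0 + M) / INR k.+1 < e / 2.
  have le_Nm : INR N <= INR k.+1 by apply: le_INR; lia.
  apply: (Rmult_lt_reg_r (INR k.+1)) => //.
  rewrite /Rdiv Rmult_assoc Rinv_l ?Rmult_1_r; nra.
apply: Rabs_def1; lra.
Qed.

End AlmostSupermultiplicative.

Open Scope R_scope.

Theorem theorem1 (D : seq nat) (HD : all (fun d : nat => leq 1 d) D) :
  exists L : R,
    is_lub (fun r : R => exists n : nat, leq 1 n /\
                          r = INR (circ_alpha D n) / INR n) L /\
    Un_cv (fun k : nat => INR (circ_alpha D k.+1) / INR k.+1) L.
Proof.
pose M := \max_(d <- D) d.
have le_DM : all (fun d => (d <= M)%nat) D.
  by apply/allP => d Dd; apply: leq_bigmax_seq.
apply: (ratio_cvg_sup (M := M)).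
- exact: circ_alpha_le_order.
- by move=> n m p; apply: circ_alpha_blocks.
Qed.
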